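(* Consider the discrete-time plant $$z_{k+1} = A_{ss} z_k + B_{1s} d_k + B_{2s} u_k,\quad e_k = C_{1s} z_k + D_{11} d_k + D_{12} u_k,\quad \hat y_k = z_k,\quad z_0\in\mathbb{I},$$ with $z_k\in\mathbb{R}^N$, $N=n+\bar N$, $u_k\in\mathbb{R}^{n_u}$, and $\mathbb{I} = \{(\bar p,\bar q) : \bar p\in\varepsilon(P),\ \bar q\in\varepsilon(Q)\}$, where $P\in\mathbb{S}^n$, $Q\in\mathbb{S}^{\bar N}$ are positive definite and $\varepsilon(P)=\{y: y^TPy\le 1\}$ (this is the lifted LPV model with all scheduling-parameter input matrices equal to zero, i.e., an LTI model). Then a static state-feedback LTI controller $u_k = D^c \hat y_k$ such that the closed loop is stable and $$\sup \{\lVert e \rVert_{\ell_2} \mid \lVert d \rVert_{\ell_2} \leq 1,\ z_0 \in \mathbb{I} \}< \gamma$$ exists if there exist a positive definite matrix $R \in \mathbb{S}^{N}$, a matrix $S \in \mathbb{R}^{n_u \times N}$, and positive scalars $b$, $f_{11}$, $f_{12}$, $f_2$ such that $$\begin{bmatrix} - R & A_{ss} R + B_{2s} S & B_{1s} & 0 \\ \ast & - R & 0 & (C_{1s} R + D_{12} S)^T \\ \ast & \ast & -f_2 I & D_{11}^T \\ \ast & \ast & \ast & -b I \end{bmatrix} \prec 0, \quad b + f_{11} + f_{12} + f_2 < 2\gamma, \quad \begin{bmatrix} F_1 & \Gamma^T \\ \Gamma & R \end{bmatrix} \succ 0,$$ where $\Gamma = \mathrm{diag}(P^{-1/2}, Q^{-1/2})$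 and $F_1 = \mathrm{diag}(f_{11} I_n, f_{12}I_{\bar{N}})$. If this problem is feasible, the controller is $u = SR^{-1}\hat y$, i.e., for the underlying nonlinear system with lifting map $\Phi$ and no measurement noise, $u = SR^{-1}\Phi(x)$.
   Context: $\ast$ denotes entries inferred by symmetry; $\mathbb{S}^m$ denotes real symmetric $m\times m$ matrices. *)

From HB Require Import structures.
From mathcomp Require Import all_boot all_order all_algebra.
From mathcomp Require Import all_classical all_reals all_analysis.
Set Implicit Arguments. Unset Strict Implicit. Unset Printing Implicit Defensive.
Import Order.TTheory GRing.Theory Num.Theory.
Local Open Scope classical_set_scope.
Local Open Scope ring_scope.

Section Defs.
Variable R : realType.

Definition posdef m (M : 'M[R]_m) : Prop :=
  M^T = M /\ forall x : 'cV[R]_m, x != 0 -> 0 < (x^T *m M *m x) 0 0.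

Definition negdef m (M : 'M[R]_m) : Prop := posdef (- M).

Definition is_inv_sqrt m (M X : 'M[R]_m) : Prop :=
  posdef X /\ X *m X = invmx M.

Definition ellipsoid m (P : 'M[R]_m) : set 'cV[R]_m :=
  [set y | (y^T *m P *m y) 0 0 <= 1].

Definition init_set n Nb (P : 'M[R]_n) (Q : 'M[R]_Nb) : set 'cV[R]_(n + Nb) :=
  [set z | exists p q, ellipsoid P p /\ ellipsoid Q q /\ z = col_mx p q].

Definition sqnorm m (v : 'cV[R]_m) : R := \sum_i (v i 0) ^+ 2.

Definition l2sq m (x : nat -> 'cV[R]_m) : \bar R :=
  (\sum_(0 <= k <oo) (sqnorm (x k))%:E)%E.

Definition l2norm m (x : nat -> 'cV[R]_m) : \bar R :=
  match l2sq x with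
  | EFin r => (Num.sqrt r)%:E
  | _ => +oo%E
  end.

Fixpoint cl_state N nd nu (A : 'M[R]_N) (B1 : 'M[R]_(N, nd)) (B2 : 'M[R]_(N, nu))
  (Dc : 'M[R]_(nu, N)) (d : nat -> 'cV[R]_nd) (z0 : 'cV[R]_N) (k : nat)
  : 'cV[R]_N :=
  match k with
  | 0 => z0
  | k'.+1 => let z := cl_state A B1 B2 Dc d z0 k' in
             A *m z + B1 *m d k' + B2 *m (Dc *m z)
  end.

Definition cl_output N nd nu ne (A : 'M[R]_N) (B1 : 'M[R]_(N, nd))
  (B2 : 'M[R]_(N, nu)) (C1 : 'M[R]_(ne, N)) (D11 : 'M[R]_(ne, nd))
  (D12 : 'M[R]_(ne, nu)) (Dc : 'M[R]_(nu, N)) (d : nat -> 'cV[R]_nd)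
  (z0 : 'cV[R]_N) (k : nat) : 'cV[R]_ne :=
  let z := cl_state A B1 B2 Dc d z0 k in
  C1 *m z + D11 *m d k + D12 *m (Dc *m z).

Definition schur_stable N (Acl : 'M[R]_N) : Prop :=
  forall (z0 : 'cV[R]_N) (i : 'I_N),
    (fun k : nat => ((Acl ^+ k) *m z0) i 0) @ \oo --> 0.

Definition worst_case nd nu ne n Nb (P : 'M[R]_n) (Q : 'M[R]_Nb)
  (A : 'M[R]_(n + Nb)) (B1 : 'M[R]_(n + Nb, nd))
  (B2 : 'M[R]_(n + Nb, nu)) (C1 : 'M[R]_(ne, n + Nb)) (D11 : 'M[R]_(ne, nd))
  (D12 : 'M[R]_(ne, nu)) (Dc : 'M[R]_(nu, n + Nb)) : \bar R :=
  ereal_sup [set x | exists (d : nat -> 'cV[R]_nd) z0,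
     (l2norm d <= 1%:E)%E /\ init_set P Q z0 /\
     x = l2norm (cl_output A B1 B2 C1 D11 D12 Dc d z0)].

End Defs.

From HB Require Import structures.
From mathcomp Require Import all_boot all_order all_algebra.
From mathcomp Require Import all_classical all_reals all_analysis.
From mathcomp Require Import ring lra.
Import Order.TTheory GRing.Theory Num.Theory.
Import numFieldNormedType.Exports.
Set Implicit Arguments. Unset Strict Implicit. Unset Printing Implicit Defensive.
Local Open Scope classical_set_scope.
Local Open Scope ring_scope.

(* V z = z^T RR^-1 z is a storage function for the closed loop u = S RR^-1 z:
   the H-infinity LMI evaluated at (RR^-1 z', RR^-1 z, d, e / b) is
   V z' - V z + |e|^2 / b - f2 |d|^2, hence nonpositive, and summing along a
   trajectory gives ||e||^2 <= b (V z0 + f2 ||d||^2).  The Schur complement of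
   the initial-set LMI gives V (Gamma w) <= w^T F1 w <= f11 + f12 whenever
   Gamma w = z0 lies in the initial set, so ||e|| <= sqrt (b (f11 + f12 + f2)),
   which is below gamma by AM-GM.  For d = 0 the strict LMI makes
   RR^-1 - Acl^T RR^-1 Acl positive definite, so V is a Lyapunov function. *)

Section QuadraticForms.
Variable R : realType.

Definition dot m (u w : 'cV[R]_m) : R := (u^T *m w) 0 0.

Lemma dotE m (u w : 'cV[R]_m) : dot u w = \sum_i u i 0 * w i 0.
Proof. by rewrite /dot !mxE; apply: eq_bigr => i _; rewrite mxE. Qed.

Lemma dotC m (u w : 'cV[R]_m) : dot u w = dot w u.
Proof. by rewrite !dotE; apply: eq_bigr => i _; rewrite mulrC. Qed.

Lemma dotDl m (u v w : 'cV[R]_m) : dot (u + v) w = dot u w + dot v w.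
Proof. by rewrite !dotE -big_split; apply: eq_bigr => i _; rewrite mxE mulrDl. Qed.

Lemma dotDr m (u v w : 'cV[R]_m) : dot w (u + v) = dot w u + dot w v.
Proof. by rewrite dotC dotDl !(dotC w). Qed.

Lemma dotZl m a (u w : 'cV[R]_m) : dot (a *: u) w = a * dot u w.
Proof. by rewrite !dotE mulr_sumr; apply: eq_bigr => i _; rewrite mxE mulrA. Qed.

Lemma dotZr m a (u w : 'cV[R]_m) : dot w (a *: u) = a * dot w u.
Proof. by rewrite dotC dotZl dotC. Qed.

Lemma dotNl m (u w : 'cV[R]_m) : dot (- u) w = - dot u w.
Proof. by rewrite -scaleN1r dotZl mulN1r. Qed.

Lemma dotNr m (u w : 'cV[R]_m) : dot w (- u) = - dot w u.
Proof. by rewrite dotC dotNl dotC. Qed.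

Lemma dot0l m (w : 'cV[R]_m) : dot 0 w = 0.
Proof. by rewrite -(scale0r 0) dotZl mul0r. Qed.

Lemma dot0r m (w : 'cV[R]_m) : dot w 0 = 0.
Proof. by rewrite dotC dot0l. Qed.

Lemma dot_trmxr m p (M : 'M[R]_(m, p)) (u : 'cV[R]_p) (w : 'cV[R]_m) :
  dot u (M^T *m w) = dot (M *m u) w.
Proof. by rewrite /dot mulmxA -trmx_mul. Qed.

Lemma dot_col_mx m1 m2 (u1 w1 : 'cV[R]_m1) (u2 w2 : 'cV[R]_m2) :
  dot (col_mx u1 u2) (col_mx w1 w2) = dot u1 w1 + dot u2 w2.
Proof. by rewrite /dot tr_col_mx mul_row_col mxE. Qed.

Lemma dot_block_mx m1 m2 p1 p2 (A : 'M[R]_(m1, p1)) (B : 'M[R]_(m1, p2))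
    (C : 'M[R]_(m2, p1)) (D : 'M[R]_(m2, p2)) u1 u2 w1 w2 :
  dot (col_mx u1 u2) (block_mx A B C D *m col_mx w1 w2) =
  dot u1 (A *m w1) + dot u1 (B *m w2) + dot u2 (C *m w1) + dot u2 (D *m w2).
Proof. by rewrite mul_block_col dot_col_mx !dotDr !addrA. Qed.

Lemma dot_ge0 m (u : 'cV[R]_m) : 0 <= dot u u.
Proof. by rewrite dotE; apply: sumr_ge0 => i _; rewrite -expr2 sqr_ge0. Qed.

Lemma sqnorm_dot m (u : 'cV[R]_m) : sqnorm u = dot u u.
Proof. by rewrite dotE; apply: eq_bigr => i _; rewrite expr2. Qed.

Lemma quad_formE m (M : 'M[R]_m) (x : 'cV[R]_m) :
  (x^T *m M *m x) 0 0 = dot x (M *m x).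
Proof. by rewrite /dot mulmxA. Qed.

Lemma posdef_ge0 m (M : 'M[R]_m) x : posdef M -> 0 <= dot x (M *m x).
Proof.
move=> [_ M_pos]; have [->|x_neq0] := eqVneq x 0; first by rewrite dot0l.
by rewrite -quad_formE; apply/ltW/M_pos.
Qed.

Lemma negdef_le0 m (M : 'M[R]_m) x : negdef M -> dot x (M *m x) <= 0.
Proof. by move=> /(posdef_ge0 x); rewrite mulNmx dotNr oppr_ge0. Qed.

Lemma negdef_lt0 m (M : 'M[R]_m) x : negdef M -> x != 0 -> dot x (M *m x) < 0.
Proof. by move=> [_ M_neg] /M_neg; rewrite quad_formE mulNmx dotNr oppr_gt0. Qed.

Lemma posdef_unit m (M : 'M[R]_m) : posdef M -> M \in unitmx.
Proof.
move=> [M_sym M_pos]; rewrite -row_free_unit; apply: inj_row_free => v vM0.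
apply/eqP/negPn/negP => v_neq0.
have vT_neq0 : v^T != 0 by rewrite -(inj_eq trmx_inj) trmxK trmx0.
have := M_pos _ vT_neq0; rewrite quad_formE.
by rewrite -M_sym -trmx_mul vM0 trmx0 dot0r ltxx.
Qed.

Lemma posdef_invmx m (M : 'M[R]_m) : posdef M -> posdef (invmx M).
Proof.
move=> M_pd; have M_unit := posdef_unit M_pd.
split; first by rewrite trmx_inv M_pd.1.
move=> x x_neq0; rewrite quad_formE.
have y_neq0 : invmx M *m x != 0.
  by apply: contraNneq x_neq0 => y0; rewrite -[x](mulKVmx M_unit) y0 mulmx0.
by have := M_pd.2 _ y_neq0; rewrite quad_formE mulKVmx // dotC.
Qed.

Lemma posdef_schur_le p m (F : 'M[R]_p) (G : 'M[R]_(m, p)) (X : 'M[R]_m) w :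
  X \in unitmx -> posdef (block_mx F G^T G X) ->
  dot (G *m w) (invmx X *m (G *m w)) <= dot w (F *m w).
Proof.
move=> X_unit /(posdef_ge0 (col_mx w (- (invmx X *m (G *m w))))).
rewrite dot_block_mx !mulmxN mulKVmx // !dotNl !dotNr dot_trmxr opprK.
by rewrite [dot (G *m w) _]dotC; lra.
Qed.

Lemma psd_cauchy_schwarz m (G : 'M[R]_m) x y t :
  G^T = G -> (forall v, 0 <= dot v (G *m v)) ->
  2 * t * dot x (G *m y) <= dot x (G *m x) + t ^+ 2 * dot y (G *m y).
Proof.
move=> G_sym G_psd; have := G_psd (x - t *: y).
rewrite mulmxBr -scalemxAr dotDl !dotDr !dotNl !dotNr !dotZl !dotZr.
rewrite -[in dot y (G *m x)]G_sym dot_trmxr [dot (G *m y) x]dotC.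
by move=> ?; nra.
Qed.

Lemma posdef_quad_cvg0 m (G : 'M[R]_m) (x : nat -> 'cV[R]_m) :
  posdef G -> (fun k => dot (x k) (G *m x k)) @ \oo --> 0 ->
  forall i, (fun k => x k i 0) @ \oo --> 0.
Proof.
move=> G_pd qx0 i.
(* [x k i 0] is the [G]-inner product of [x k] with [G^-1 e_i], so
   Cauchy-Schwarz for [G] bounds it by the [G]-form of [x k]. *)
pose y : 'cV[R]_m := invmx G *m delta_mx i 0.
have xGy k : dot (x k) (G *m y) = x k i 0.
  by rewrite mulKVmx ?posdef_unit // /dot -colE !mxE.
have G_psd v : 0 <= dot v (G *m v) := posdef_ge0 v G_pd.
pose c := dot y (G *m y).
have c_ge0 : 0 <= c := G_psd y.
apply/cvgrPdist_lt => eps eps_gt0.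
pose t := eps / (c + 1).
have t_gt0 : 0 < t by rewrite divr_gt0 // ltr_wpDl.
have tc : t * c + t = eps by rewrite /t; field; rewrite gt_eqF // ltr_wpDl.
near=> k; rewrite sub0r normrN.
have qk_ge0 := G_psd (x k).
have : `|dot (x k) (G *m x k)| < eps * t.
  by near: k; apply: cvgr0_norm_lt qx0 _ (mulr_gt0 eps_gt0 t_gt0).
rewrite ger0_norm // => qk_small.
have cs_pos := psd_cauchy_schwarz (x k) y t G_pd.1 G_psd.
have cs_neg := psd_cauchy_schwarz (x k) y (- t) G_pd.1 G_psd.
rewrite xGy -/c in cs_pos cs_neg.
by rewrite ltr_norml; apply/andP; split; nra.
Unshelve. all: by end_near.
Qed.

Lemma dot_lyap_diff m (A X : 'M[R]_m) x :
  dot x ((X - A^T *m X *m A) *m x) = dot x (X *m x) - dot (A *m x) (X *m (A *m x)).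
Proof. by rewrite mulmxBl dotDr dotNr -!mulmxA dot_trmxr. Qed.

Lemma lyapunov_schur_stable m (A X : 'M[R]_m) :
  posdef X -> posdef (X - A^T *m X *m A) -> schur_stable A.
Proof.
move=> X_pd G_pd z0 i.
pose x k := A ^+ k *m z0.
pose V k := dot (x k) (X *m x k).
have V_decr k : dot (x k) ((X - A^T *m X *m A) *m x k) = V k - V k.+1.
  by rewrite dot_lyap_diff /V /x exprS -mulmxE -mulmxA.
apply: (posdef_quad_cvg0 G_pd) i; under eq_fun do rewrite V_decr.
have V_nonincr : {homo V : k l / (k <= l)%N >-> l <= k}.
  by apply/nonincreasing_seqP => k; rewrite -subr_ge0 -V_decr posdef_ge0.
have V_lb : has_lbound (range V) by exists 0 => _ [k _ <-]; exact: posdef_ge0.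
have V_cvg := nonincreasing_is_cvgn V_nonincr V_lb.
rewrite -(subrr (limn V)); apply: cvgB => //.
by rewrite (cvg_shiftS V).
Qed.
End QuadraticForms.

Section InitialSet.
Variable R : realType.

Lemma ellipsoid_inv_sqrt_image m (P X : 'M[R]_m) p :
  posdef P -> is_inv_sqrt P X -> ellipsoid P p ->
  exists2 w, X *m w = p & dot w w <= 1.
Proof.
move=> P_pd [[X_sym _] XX] p_in.
have XXPp : X *m (X *m (P *m p)) = p.
  by rewrite mulmxA XX mulKmx // posdef_unit.
exists (X *m (P *m p)) => //.
by rewrite -dot_trmxr X_sym XXPp dotC -quad_formE.
Qed.

Lemma init_set_image n Nb (P : 'M[R]_n) (Q : 'M[R]_Nb) Gp Gq f11 f12 z0 :
  posdef P -> posdef Q -> is_inv_sqrt P Gp -> is_inv_sqrt Q Gq ->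
  0 <= f11 -> 0 <= f12 -> init_set P Q z0 ->
  exists2 w, block_mx Gp 0 0 Gq *m w = z0 &
    dot w (block_mx (f11%:M : 'M[R]_n) 0 0 (f12%:M : 'M[R]_Nb) *m w) <= f11 + f12.
Proof.
move=> P_pd Q_pd Gp_isqrt Gq_isqrt f11_ge0 f12_ge0 [p [q [p_in [q_in ->]]]].
have [wp <- wp_le1] := ellipsoid_inv_sqrt_image P_pd Gp_isqrt p_in.
have [wq <- wq_le1] := ellipsoid_inv_sqrt_image Q_pd Gq_isqrt q_in.
exists (col_mx wp wq); first by rewrite mul_block_col !mul0mx addr0 add0r.
rewrite mul_block_col !mul0mx addr0 add0r dot_col_mx !mul_scalar_mx !dotZr.
by nra.
Qed.

Lemma init_set_quad_le n Nb (P : 'M[R]_n) (Q : 'M[R]_Nb) Gp Gq f11 f12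
    (X : 'M[R]_(n + Nb)) z0 :
  posdef P -> posdef Q -> is_inv_sqrt P Gp -> is_inv_sqrt Q Gq ->
  0 <= f11 -> 0 <= f12 -> X \in unitmx ->
  posdef (block_mx (block_mx (f11%:M : 'M[R]_n) 0 0 (f12%:M : 'M[R]_Nb))
                   (block_mx Gp 0 0 Gq)^T (block_mx Gp 0 0 Gq) X) ->
  init_set P Q z0 -> dot z0 (invmx X *m z0) <= f11 + f12.
Proof.
move=> P_pd Q_pd Gp_isqrt Gq_isqrt f11_ge0 f12_ge0 X_unit schur z0_in.
have [w <- w_le] := init_set_image P_pd Q_pd Gp_isqrt Gq_isqrt f11_ge0 f12_ge0 z0_in.
exact: le_trans (posdef_schur_le w X_unit schur) w_le.
Qed.

End InitialSet.

Section L2.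
Variable R : realType.

Lemma l2norm_le_sqrtP m (x : nat -> 'cV[R]_m) c : 0 <= c ->
  (l2norm x <= (Num.sqrt c)%:E)%E <->
  forall K, \sum_(0 <= k < K) sqnorm (x k) <= c.
Proof.
move=> c_ge0.
have sqnorm_ge0 k : (0 <= (sqnorm (x k))%:E)%E by rewrite lee_fin sqnorm_dot dot_ge0.
have partial_le K : ((\sum_(0 <= k < K) sqnorm (x k))%:E <= l2sq x)%E.
  by rewrite -sumEFin; apply: nneseries_lim_ge.
have l2sq_ge0 : (0 <= l2sq x)%E by apply: nneseries_ge0.
rewrite /l2norm; split.
  case: (l2sq x) partial_le l2sq_ge0 => [r| |] //= partial_le _.
  rewrite lee_fin ler_sqrt // => r_le K.
  by apply: le_trans r_le; rewrite -lee_fin.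
move=> partial_bound.
have : (l2sq x <= c%:E)%E.
  apply: lime_le; first exact: is_cvg_nneseries.
  by apply: nearW => K; rewrite sumEFin lee_fin.
case: (l2sq x) l2sq_ge0 => [r| |] //= _.
by rewrite !lee_fin; apply: ler_wsqrtr.
Qed.

End L2.

Section Dissipation.
Variables (R : realType) (N nu nd ne : nat).
Variables (Ass : 'M[R]_N) (B1s : 'M[R]_(N, nd)) (B2s : 'M[R]_(N, nu)).
Variables (C1s : 'M[R]_(ne, N)) (D11 : 'M[R]_(ne, nd)) (D12 : 'M[R]_(ne, nu)).
Variables (RR : 'M[R]_N) (S : 'M[R]_(nu, N)) (b f2 : R).

Definition hinf_lmi :=
  block_mx
    (block_mx (- RR) (Ass *m RR + B2s *m S) ((Ass *m RR + B2s *m S)^T) (- RR))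
    (block_mx B1s (0 : 'M[R]_(N, ne)) (0 : 'M[R]_(N, nd)) ((C1s *m RR + D12 *m S)^T))
    (block_mx B1s (0 : 'M[R]_(N, ne)) (0 : 'M[R]_(N, nd)) ((C1s *m RR + D12 *m S)^T))^T
    (block_mx (- (f2%:M : 'M[R]_nd)) D11^T D11 (- (b%:M : 'M[R]_ne))).

Lemma hinf_lmi_quadE v1 v2 v3 v4 :
  let v := col_mx (col_mx v1 v2) (col_mx v3 v4) in
  dot v (hinf_lmi *m v) =
  - dot v1 (RR *m v1) + 2 * dot v1 ((Ass *m RR + B2s *m S) *m v2)
  + 2 * dot v1 (B1s *m v3) - dot v2 (RR *m v2)
  + 2 * dot v4 ((C1s *m RR + D12 *m S) *m v2) - f2 * dot v3 v3
  + 2 * dot v4 (D11 *m v3) - b * dot v4 v4.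
Proof.
rewrite /hinf_lmi !tr_block_mx !dot_block_mx !trmx0 trmxK !mul0mx !dot0r.
rewrite !mulNmx !dotNr !mul_scalar_mx !dotZr !dot_trmxr.
rewrite [dot (_ *m v2) v1]dotC [dot (B1s *m v3) v1]dotC.
rewrite [dot (_ *m v2) v4]dotC [dot (D11 *m v3) v4]dotC.
by ring.
Qed.

Local Notation Dc := (S *m invmx RR).
Local Notation V z := (dot z (invmx RR *m z)).
Local Notation next z d := (Ass *m z + B1s *m d + B2s *m (Dc *m z)).
Local Notation out z d := (C1s *m z + D11 *m d + D12 *m (Dc *m z)).

Definition dissipation_vec (z : 'cV[R]_N) (d : 'cV[R]_nd) :=
  col_mx (col_mx (invmx RR *m next z d) (invmx RR *m z)) (col_mx d (b^-1 *: out z d)).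

Hypothesis RR_unit : RR \in unitmx.
Hypothesis b_gt0 : 0 < b.

Lemma dissipation_vec_neq0 z d : z != 0 -> dissipation_vec z d != 0.
Proof.
apply: contra_neq => /eqP; rewrite !col_mx_eq0 => /andP[/andP[_ /eqP Xz0] _].
by rewrite -[z](mulKVmx RR_unit) Xz0 mulmx0.
Qed.

Lemma dot_hinf_lmi_dissipation_vec z d :
  dot (dissipation_vec z d) (hinf_lmi *m dissipation_vec z d) =
  V (next z d) - V z + b^-1 * dot (out z d) (out z d) - f2 * dot d d.
Proof.
rewrite /dissipation_vec hinf_lmi_quadE.
have AR_X : (Ass *m RR + B2s *m S) *m (invmx RR *m z) = Ass *m z + B2s *m (Dc *m z).
  by rewrite mulmxDl -!mulmxA mulKVmx.
have CR_X : (C1s *m RR + D12 *m S) *m (invmx RR *m z) = C1s *m z + D12 *m (Dc *m z).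
  by rewrite mulmxDl -!mulmxA mulKVmx.
set zp := next z d; set e := out z d.
have zp_split : dot (invmx RR *m zp) zp =
    dot (invmx RR *m zp) (Ass *m z + B2s *m (Dc *m z))
    + dot (invmx RR *m zp) (B1s *m d).
  by rewrite -dotDr addrAC.
have e_split : dot e e = dot e (C1s *m z + D12 *m (Dc *m z)) + dot e (D11 *m d).
  by rewrite -dotDr addrAC.
rewrite !mulKVmx // AR_X CR_X !dotZl !dotZr [V zp]dotC [V z]dotC.
by rewrite zp_split e_split; field; rewrite gt_eqF.
Qed.

Local Notation state := (cl_state Ass B1s B2s Dc).
Local Notation output := (cl_output Ass B1s B2s C1s D11 D12 Dc).

Hypothesis lmi_neg : negdef hinf_lmi.

Lemma cl_dissipation d z0 k :
  V (state d z0 k.+1) - V (state d z0 k) + b^-1 * sqnorm (output d z0 k)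
  <= f2 * sqnorm (d k).
Proof.
by rewrite !sqnorm_dot -subr_le0 -dot_hinf_lmi_dissipation_vec; apply: negdef_le0.
Qed.

Lemma cl_dissipation_sum d z0 K :
  \sum_(0 <= k < K) sqnorm (output d z0 k)
  <= b * (V z0 - V (state d z0 K) + f2 * \sum_(0 <= k < K) sqnorm (d k)).
Proof.
have : \sum_(0 <= k < K) (V (state d z0 k.+1) - V (state d z0 k)
                          + b^-1 * sqnorm (output d z0 k))
       <= \sum_(0 <= k < K) f2 * sqnorm (d k).
  by apply: ler_sum => k _; apply: cl_dissipation.
rewrite big_split /= telescope_sumr // -!mulr_sumr.
rewrite -(ler_pM2l b_gt0) mulrDr mulrA mulfV ?gt_eqF // mul1r.
by move=> ?; lra.
Qed.

Lemma cl_lyapunov_posdef : posdef RR ->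
  posdef (invmx RR - (Ass + B2s *m Dc)^T *m invmx RR *m (Ass + B2s *m Dc)).
Proof.
move=> RR_pd; have [X_sym _] := posdef_invmx RR_pd.
split; first by rewrite linearB /= !trmx_mul X_sym trmxK mulmxA.
move=> x x_neq0; rewrite quad_formE dot_lyap_diff.
have := negdef_lt0 lmi_neg (dissipation_vec_neq0 0 x_neq0).
rewrite dot_hinf_lmi_dissipation_vec !mulmx0 !addr0 dot0l mulr0 subr0 mulmxDl mulmxA.
have b_inv_gt0 : 0 < b^-1 by rewrite invr_gt0.
by have := dot_ge0 (C1s *m x + D12 *m (Dc *m x)); nra.
Qed.

Lemma cl_schur_stable : posdef RR -> schur_stable (Ass + B2s *m Dc).
Proof.
move=> RR_pd.
exact: lyapunov_schur_stable (posdef_invmx RR_pd) (cl_lyapunov_posdef RR_pd).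
Qed.

Lemma cl_output_l2norm_le d z0 c : posdef RR -> 0 <= f2 ->
  (l2norm d <= 1%:E)%E -> V z0 <= c ->
  (l2norm (output d z0) <= (Num.sqrt (b * (c + f2)))%:E)%E.
Proof.
move=> RR_pd f2_ge0 d_le1 z0_le.
have V_ge0 z : 0 <= V z := posdef_ge0 z (posdef_invmx RR_pd).
have d_partial : forall K, \sum_(0 <= k < K) sqnorm (d k) <= 1.
  by apply/(l2norm_le_sqrtP d ler01); rewrite sqrtr1.
have c_ge0 : 0 <= c := le_trans (V_ge0 z0) z0_le.
apply/l2norm_le_sqrtP; first by rewrite mulr_ge0 ?addr_ge0 // ltW.
move=> K; apply: le_trans (cl_dissipation_sum d z0 K) _.
rewrite ler_pM2l //; have := V_ge0 (state d z0 K); have := d_partial K; nra.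
Qed.

End Dissipation.

Lemma sqrt_mul_lt (R : rcfType) (a c g : R) :
  0 <= a -> 0 <= c -> a + c < 2 * g -> Num.sqrt (a * c) < g.
Proof.
move=> a_ge0 c_ge0 ac_lt; have g_gt0 : 0 < g by lra.
rewrite -(ger0_norm (ltW g_gt0)) -sqrtr_sqr ltr_sqrt ?exprn_gt0 //.
by have := sqr_ge0 (a - c); nra.
Qed.

Theorem corollary1 (R : realType) (n Nb nu nd ne : nat)
  (P : 'M[R]_n) (Q : 'M[R]_Nb) (Gp : 'M[R]_n) (Gq : 'M[R]_Nb)
  (Ass : 'M[R]_(n + Nb)) (B1s : 'M[R]_(n + Nb, nd)) (B2s : 'M[R]_(n + Nb, nu))
  (C1s : 'M[R]_(ne, n + Nb)) (D11 : 'M[R]_(ne, nd)) (D12 : 'M[R]_(ne, nu))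
  (gamma : R)
  (RR : 'M[R]_(n + Nb)) (S : 'M[R]_(nu, n + Nb)) (b f11 f12 f2 : R) :
  posdef P -> posdef Q ->
  is_inv_sqrt P Gp -> is_inv_sqrt Q Gq ->
  posdef RR -> 0 < b -> 0 < f11 -> 0 < f12 -> 0 < f2 ->
  negdef (block_mx
            (block_mx (- RR) (Ass *m RR + B2s *m S)
                      ((Ass *m RR + B2s *m S)^T) (- RR))
            (block_mx B1s (0 : 'M[R]_(n + Nb, ne))
                      (0 : 'M[R]_(n + Nb, nd)) ((C1s *m RR + D12 *m S)^T))
            (block_mx B1s (0 : 'M[R]_(n + Nb, ne))
                      (0 : 'M[R]_(n + Nb, nd)) ((C1s *m RR + D12 *m S)^T))^T
            (block_mx (- (f2%:M : 'M[R]_(nd))) (D11^T) D11 (- (b%:M : 'M[R]_(ne))))) ->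
  b + f11 + f12 + f2 < 2 * gamma ->
  posdef (block_mx
            (block_mx (f11%:M : 'M[R]_(n)) 0 0 (f12%:M : 'M[R]_(Nb)))
            (block_mx Gp 0 0 Gq)^T
            (block_mx Gp 0 0 Gq)
            RR) ->
  let Dc := S *m invmx RR in
  schur_stable (Ass + B2s *m Dc) /\
  (worst_case P Q Ass B1s B2s C1s D11 D12 Dc < gamma%:E)%E.
Proof.
move=> P_pd Q_pd Gp_isqrt Gq_isqrt RR_pd b_gt0 f11_gt0 f12_gt0 f2_gt0 lmi_neg
  gain_bound init_lmi Dc.
have RR_unit := posdef_unit RR_pd.
have hinf_neg : negdef (hinf_lmi Ass B1s B2s C1s D11 D12 RR S b f2) := lmi_neg.
split; first exact: (cl_schur_stable RR_unit b_gt0 hinf_neg RR_pd).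
apply: (@le_lt_trans _ _ (Num.sqrt (b * (f11 + f12 + f2)))%:E).
  apply/ereal_supP => _ [d [z0 [d_le1 [z0_in ->]]]].
  apply: (cl_output_l2norm_le RR_unit b_gt0 hinf_neg) => //; first exact: ltW.
  by apply: init_set_quad_le init_lmi z0_in => //; apply: ltW.
rewrite lte_fin sqrt_mul_lt ?(ltW b_gt0) //; first by rewrite !addr_ge0 ?ltW.
by rewrite !addrA.
Qed.
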